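(* For every integer $T=3k+1$ with $k\ge 2$ and every $\sigma\in\mathfrak S_3$, the vector $\sigma c$ with $c=[2,-1,-1,-1,2,2]$ defines a facet of $P^T$.
   Context: For an integer $T\ge 2$, let $\Omega_T$ be the set of words $w=s_1s_2\cdots s_T$ over $\{1,2,3\}$ with $s_l\neq s_{l+1}$ for $l=1,\dots,T-1$. For $w\in\Omega_T$ and an ordered pair $ij$, $i\neq j$, let $x_{ij}(w)$ be the number of indices $1\le l\le T-1$ with $s_ls_{l+1}=ij$. Vectors of $\mathbb R^6$ are indexed in the order $[x_{12},x_{13},x_{21},x_{23},x_{31},x_{32}]$. Let $a_w=[x_{12}(w),\dots,x_{32}(w)]$ and $P^T=\mathrm{conv}\{a_w:w\in\Omega_T\}$. $\mathfrak S_3$ acts on $\mathbb R^6$ by $(\sigma c)_{ij}=c_{\sigma(i)\sigma(j)}$. A vector $c$ defines a facet of $P^T$ if $c\cdot a_w\ge0$ for all $w\in\Omega_T$ and $\{x\in P^T: c\cdot x=0\}$ is a facet of $P^T$. *)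

From HB Require Import structures.
From mathcomp Require Import all_boot all_order all_algebra all_fingroup.
Set Implicit Arguments. Unset Strict Implicit. Unset Printing Implicit Defensive.
Import Order.TTheory GRing.Theory Num.Theory.
Local Open Scope ring_scope.

(* Letters 1,2,3 are encoded as the ordinals 0,1,2 of 'I_3.
   Coordinates of R^6 are indexed by 'I_6 in the order
   [x12, x13, x21, x23, x31, x32]. *)

Definition pfst (k : 'I_6) : 'I_3 :=
  inord (match val k with 0 | 1 => 0 | 2 | 3 => 1 | _ => 2 end)%N.
Definition psnd (k : 'I_6) : 'I_3 :=
  inord (match val k with 0 => 1 | 1 => 2 | 2 => 0 | 3 => 2 | 4 => 0 | _ => 1 end)%N.
(* inverse of k |-> (pfst k, psnd k) on pairs i <> j *)
Definition pidx (i j : 'I_3) : 'I_6 :=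
  inord (match val i, val j with
         | 0, 1 => 0 | 0, 2 => 1 | 1, 0 => 2 | 1, 2 => 3 | 2, 0 => 4 | _, _ => 5 end)%N.

Definition is_word (T : nat) (w : T.-tuple 'I_3) : bool :=
  [forall l : 'I_T, (l.+1 < T)%N ==> (tnth w l != nth ord0 w l.+1)].

Definition xcount (T : nat) (w : T.-tuple 'I_3) (i j : 'I_3) : nat :=
  count (fun l => (nth ord0 w l == i) && (nth ord0 w l.+1 == j)) (iota 0 T.-1).

Definition avec (R : nzRingType) (T : nat) (w : T.-tuple 'I_3) : 'rV[R]_6 :=
  \row_k (xcount w (pfst k) (psnd k))%:R.

Definition dot (R : nzRingType) (u v : 'rV[R]_6) : R := \sum_k u 0 k * v 0 k.

Definition inPT (R : realFieldType) (T : nat) (x : 'rV[R]_6) : Prop :=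
  exists lam : T.-tuple 'I_3 -> R,
    [/\ forall w, 0 <= lam w,
        forall w, lam w != 0 -> is_word w,
        \sum_w lam w = 1 &
        x = \sum_w lam w *: @avec R T w].

Definition sact (R : nzRingType) (s : 'S_3) (c : 'rV[R]_6) : 'rV[R]_6 :=
  \row_k c 0 (pidx (s (pfst k)) (s (psnd k))).

Definition has_aff_indep (R : fieldType) (S : 'rV[R]_6 -> Prop) (n : nat) : Prop :=
  exists p : 'I_n.+1 -> 'rV[R]_6,
    (forall i, S (p i)) /\
    \rank (\matrix_(i < n) (p (lift ord0 i) - p ord0)) = n.

Definition affdim (R : fieldType) (S : 'rV[R]_6 -> Prop) (d : int) : Prop :=
  (d = (-1)%R /\ forall x, ~ S x) \/
  (exists n : nat, d = n%:Z /\ has_aff_indep S n /\ ~ has_aff_indep S n.+1).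

Definition defines_facet (R : realFieldType) (T : nat) (c : 'rV[R]_6) : Prop :=
  (forall w : T.-tuple 'I_3, is_word w -> 0 <= dot c (@avec R T w)) /\
  exists d : int,
    affdim (@inPT R T) d /\
    affdim (fun x => @inPT R T x /\ dot c x = 0) (d - 1).

Definition c8 (R : nzRingType) : 'rV[R]_6 :=
  \row_k (match val k with 0 => 2 | 4 | 5 => 2 | _ => -1 end).

From HB Require Import structures.
From mathcomp Require Import all_boot all_order all_algebra all_fingroup.
From mathcomp Require Import ring zify.
Import Order.TTheory GRing.Theory Num.Theory.
Set Implicit Arguments. Unset Strict Implicit. Unset Printing Implicit Defensive.
Local Open Scope ring_scope.

(* Write [n(w)] for the number of pairs 12, 31, 32 in the word [w]; then
   [c . a_w = 3 n(w) - (T - 1)].  The potential [1 |-> 1, 2 |-> 0, 3 |-> 2] rises by at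
   least 1 across every other pair and drops by at most 2 across these, so
   [c . a_w >= -2]; as [T - 1 = 3k], [c . a_w] is a multiple of 3, hence nonnegative.
   All of P^T lies on the hyperplane [sum x = T - 1] and the face also on [c . x = 0],
   two independent equations; conversely the words [(213)^(k-2) t] for six explicit tails
   [t] give 6 affinely independent vertices of P^T, the first five of them on the face.
   Finally [sigma] permutes the coordinates and maps P^T onto itself, hence maps facets
   to facets. *)

Lemma has_aff_indep_rank (R : fieldType) (S : 'rV[R]_6 -> Prop) q (d : 'I_q -> 'rV[R]_6) n :
  (forall j x y, S x -> S y -> dot (d j) x = dot (d j) y) ->
  has_aff_indep S n -> (n + \rank (\matrix_(j < q) d j) <= 6)%N.
Proof.
move=> dS [p [Sp rk]]; rewrite -{1}rk -[\rank (\matrix_j d j)]mxrank_tr; apply: mulmx0_rank_max.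
apply/matrixP => i j; rewrite !mxE.
under eq_bigr do rewrite !mxE mulrBl.
have dotE (x : 'rV_6) : \sum_k x 0 k * d j 0 k = dot (d j) x.
  by apply: eq_bigr => k _; rewrite mulrC.
by rewrite sumrB !dotE (dS j _ _ (Sp (lift ord0 i)) (Sp ord0)) subrr.
Qed.

Lemma rank_int_right_inverse (R : fieldType) n m
    (D : 'I_n -> 'I_m -> int) (B : 'I_m -> 'I_n -> int) :
  (forall i j, \sum_k D i k * B k j = (i == j)%:R) ->
  \rank (\matrix_(i, k) (D i k)%:~R : 'M[R]_(n, m)) = n.
Proof.
move=> DB; apply/eqP; rewrite eqn_leq rank_leq_row /=.
suff /mulmx1_min_rank : 1%:M *m \matrix_(i, k) (D i k)%:~R *m \matrix_(k, j) (B k j)%:~R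
  = 1%:M :> 'M[R]_n by [].
rewrite mul1mx; apply/matrixP => i j; rewrite !mxE.
under eq_bigr do rewrite !mxE -intrM.
by rewrite -rmorph_sum DB rmorph_nat.
Qed.

Lemma has_aff_indep_mulmx (R : fieldType) (S S' : 'rV[R]_6 -> Prop) (A : 'M_6) n :
  A \in unitmx -> (forall x, S x -> S' (x *m A)) -> has_aff_indep S n -> has_aff_indep S' n.
Proof.
move=> A_unit SS' [p [Sp rk]]; exists (fun i => p i *m A); split => [i|]; first exact/SS'/Sp.
apply: etrans rk; rewrite -[RHS](mxrankMfree _ (_ : row_free A)) ?row_free_unit //.
by congr mxrank; apply/row_matrixP => i; rewrite row_mul !rowK mulmxBl.
Qed.

Lemma affdim_mulmx (R : fieldType) (S S' : 'rV[R]_6 -> Prop) (A : 'M_6) d :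
  A \in unitmx -> (forall x, S x <-> S' (x *m A)) -> affdim S d -> affdim S' d.
Proof.
move=> A_unit SS'; have S'S x : S' x -> S (x *m invmx A) by move=> S'x; apply/SS'; rewrite mulmxKV.
case=> [[-> noS]|[n [-> [Sn Sn1]]]]; [left | right]; first by split=> // x /S'S /noS.
exists n; split=> //; split; first by apply: (has_aff_indep_mulmx A_unit) Sn => x /SS'.
by move=> S'n1; apply/Sn1/(has_aff_indep_mulmx _ S'S S'n1); rewrite unitmx_inv.
Qed.

Definition l1 : 'I_3 := ord0.
Definition l2 : 'I_3 := Ordinal (isT : (1 < 3)%N).
Definition l3 : 'I_3 := Ordinal (isT : (2 < 3)%N).

(* A computable version of [k |-> (pfst k, psnd k)]: [inord] does not reduce. *)
Definition pair6 (k : 'I_6) : 'I_3 * 'I_3 :=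
  nth (l1, l2) [:: (l1, l2); (l1, l3); (l2, l1); (l2, l3); (l3, l1); (l3, l2)] k.

Lemma pair6E k : (pfst k, psnd k) = pair6 k.
Proof.
by case: k => [[|[|[|[|[|[|//]]]]]] ?]; congr pair; apply: val_inj; rewrite /= inordK.
Qed.

Lemma pfst_neq_psnd k : pfst k != psnd k.
Proof. by have := pair6E k; case: k => [[|[|[|[|[|[|//]]]]]] ?] [-> ->]. Qed.

Lemma pidxK (i j : 'I_3) : i != j -> (pfst (pidx i j), psnd (pidx i j)) = (i, j).
Proof.
rewrite pair6E; case: i => [[|[|[|//]]] ?]; case: j => [[|[|[|//]]] ?] //= _;
  rewrite /pair6 /pidx /= inordK //=; congr pair; exact: val_inj.
Qed.

Lemma pidx_pair k : pidx (pfst k) (psnd k) = k.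
Proof.
apply: val_inj; have := pair6E k.
by case: k => [[|[|[|[|[|[|//]]]]]] ?] [-> ->]; rewrite /pidx /= inordK.
Qed.

Lemma pidx_eq (i j : 'I_3) k : i != j -> (pidx i j == k) = ((i, j) == (pfst k, psnd k)).
Proof.
by move=> ij; apply/eqP/eqP => [<-|[-> ->]]; rewrite ?pidxK ?pidx_pair.
Qed.

Definition pairs (s : seq 'I_3) : seq ('I_3 * 'I_3) :=
  [seq (nth l1 s l, nth l1 s l.+1) | l <- iota 0 (size s).-1].

Lemma pairs_cons2 a b s : pairs [:: a, b & s] = (a, b) :: pairs (b :: s).
Proof.
rewrite /pairs /= -[iota 1 _]/(iota (1 + 0) _) iotaDl -map_comp.
by congr (_ :: _); apply: eq_map => l /=; rewrite add1n.
Qed.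

Lemma size_pairs s : size (pairs s) = (size s).-1.
Proof. by rewrite size_map size_iota. Qed.

Lemma pairs_map (f : 'I_3 -> 'I_3) s :
  pairs (map f s) = [seq (f p.1, f p.2) | p <- pairs s].
Proof.
elim: s => [|a [|b s] IH] //.
by rewrite [map f _]/= !pairs_cons2 /= -IH.
Qed.

Lemma xcountE T (w : T.-tuple 'I_3) i j : xcount w i j = count (pred1 (i, j)) (pairs w).
Proof. by rewrite /xcount count_map size_tuple. Qed.

Definition nrep (s : seq 'I_3) : bool := all (fun p => p.1 != p.2) (pairs s).

Lemma is_wordE T (w : T.-tuple 'I_3) : is_word w = nrep w.
Proof.
rewrite /is_word /nrep /pairs all_map size_tuple.
apply/forallP/allP => [wP l | wP l].
- rewrite mem_iota add0n => lT.
  have lT' : (l < T)%N by lia.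
  have /implyP := wP (Ordinal lT').
  by rewrite (tnth_nth l1) /=; apply; lia.
- apply/implyP => lT; rewrite (tnth_nth l1).
  by apply: wP; rewrite mem_iota; lia.
Qed.

Lemma nrep_map (f : 'I_3 -> 'I_3) s : injective f -> nrep (map f s) = nrep s.
Proof.
by move=> f_inj; rewrite /nrep pairs_map all_map; apply: eq_all => p /=; rewrite (inj_eq f_inj).
Qed.

Lemma is_word_map T (w : T.-tuple 'I_3) (f : 'I_3 -> 'I_3) :
  injective f -> is_word (map_tuple f w) = is_word w.
Proof. by move=> f_inj; rewrite !is_wordE nrep_map. Qed.

Lemma avecE (R : nzRingType) T (w : T.-tuple 'I_3) k :
  avec R w 0 k = (count (pred1 (pfst k, psnd k)) (pairs w))%:R.
Proof. by rewrite mxE xcountE. Qed.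

Lemma dot_avec (R : nzRingType) T (d : 'rV[R]_6) (w : T.-tuple 'I_3) :
  is_word w -> dot d (avec R w) = \sum_(p <- pairs w) d 0 (pidx p.1 p.2).
Proof.
rewrite /dot is_wordE /nrep; under eq_bigr do rewrite avecE.
elim: (pairs w) => [|[a b] ps IH] /=.
  by rewrite big_nil big1 // => k _; rewrite mulr0.
move=> /andP [ab /IH {}IH]; rewrite big_cons -IH.
under eq_bigr do rewrite natrD mulrDr; rewrite big_split /=; congr (_ + _).
rewrite (bigD1 (pidx a b)) //= -pidx_eq // eqxx mulr1 big1 ?addr0 // => k ne_k.
by rewrite -pidx_eq // eq_sym (negbTE ne_k) mulr0.
Qed.

Lemma dot_ones_avec (R : nzRingType) T (w : T.-tuple 'I_3) :
  is_word w -> dot (const_mx 1) (avec R w) = (T.-1)%:R.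
Proof.
have -> : T.-1 = size (pairs w) by rewrite size_pairs size_tuple.
move=> ww; rewrite dot_avec //; under eq_bigr do rewrite mxE.
by rewrite -sum1_size natr_sum.
Qed.

(* The pairs 12, 31, 32, on which [c8] takes the value 2 rather than -1. *)
Definition c8_pos (p : 'I_3 * 'I_3) : bool := (p == (l1, l2)) || (p.1 == l3).

Lemma c8_pidx (R : comNzRingType) (a b : 'I_3) :
  a != b -> c8 R 0 (pidx a b) = 3 * (c8_pos (a, b))%:R - 1.
Proof.
rewrite mxE /pidx; case: a => [[|[|[|//]]] ?]; case: b => [[|[|[|//]]] ?] //= _;
  rewrite inordK //=; ring.
Qed.

Lemma dot_c8_avec (R : comNzRingType) T (w : T.-tuple 'I_3) : is_word w ->
  dot (c8 R) (avec R w) = 3 * (count c8_pos (pairs w))%:R - (T.-1)%:R.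
Proof.
have -> : T.-1 = size (pairs w) by rewrite size_pairs size_tuple.
move=> ww; rewrite dot_avec //; move: ww; rewrite is_wordE /nrep.
elim: (pairs w) => [|[a b] ps IH] /=.
  by rewrite big_nil => _; ring.
move=> /andP [ab /IH {}IH]; rewrite big_cons IH c8_pidx // natrD -[(size ps).+1]addn1 natrD.
ring.
Qed.

Definition potential (a : 'I_3) : nat := nth 0 [:: 1; 0; 2] a.

Lemma count_c8_pos_lb (s : seq 'I_3) : nrep s ->
  ((size s).-1 + potential (head l1 s) <=
   3 * count c8_pos (pairs s) + potential (last l1 s))%N.
Proof.
elim: s => [|a [|b s] IH] //; rewrite /nrep pairs_cons2 /= => /andP [ab ws].
have step : (1 + potential a <= 3 * c8_pos (a, b) + potential b)%N.
  by case: a ab {IH ws} => [[|[|[|//]]] ?]; case: b => [[|[|[|//]]] ?].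
by have := IH ws; rewrite /=; lia.
Qed.

Lemma dot_c8_avec_ge0 (R : realFieldType) k (w : (3 * k + 1).-tuple 'I_3) :
  is_word w -> 0 <= dot (c8 R) (avec R w).
Proof.
move=> ww; rewrite dot_c8_avec // subr_ge0 -natrM ler_nat.
have := count_c8_pos_lb (_ : nrep w); rewrite -is_wordE size_tuple => /(_ ww).
have : (potential (last l1 w) <= 2)%N by case: (last l1 w) => [[|[|[|//]]] ?].
have : ((3 * k + 1).-1 = 3 * k)%N by rewrite addn1.
lia.
Qed.

Lemma inPT_avec (R : realFieldType) T (w : T.-tuple 'I_3) : is_word w -> inPT T (avec R w).
Proof.
move=> ww; exists (fun w' => (w' == w)%:R); split.
- by move=> w'; rewrite ler0n.
- by move=> w'; have [-> //|] := eqVneq w' w; rewrite eqxx.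
- by rewrite (bigD1 w) //= eqxx big1 ?addr0 // => w' /negbTE ->.
- rewrite (bigD1 w) //= eqxx scale1r big1 ?addr0 // => w' /negbTE ->.
  by rewrite scale0r.
Qed.

Lemma dot_sum_scale (R : comNzRingType) (I : finType) (d : 'rV[R]_6) (lam : I -> R) x :
  dot d (\sum_i lam i *: x i) = \sum_i lam i * dot d (x i).
Proof.
rewrite /dot; under eq_bigr do rewrite summxE mulr_sumr.
rewrite exchange_big; apply: eq_bigr => i _; rewrite mulr_sumr.
by apply: eq_bigr => k _; rewrite mxE mulrCA.
Qed.

Lemma inPT_dot (R : realFieldType) T (d x : 'rV[R]_6) (v : R) :
  (forall w : T.-tuple 'I_3, is_word w -> dot d (avec R w) = v) -> inPT T x -> dot d x = v.
Proof.
move=> dw [lam [_ lam_word lam1 ->]]; rewrite dot_sum_scale -[v]mul1r -lam1 mulr_suml.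
by apply: eq_bigr => w _; have [->|/lam_word/dw ->] := eqVneq (lam w) 0; rewrite ?mul0r.
Qed.

Lemma inPT_dot_ones (R : realFieldType) T (x : 'rV[R]_6) :
  inPT T x -> dot (const_mx 1) x = (T.-1)%:R.
Proof. by apply: inPT_dot => w; apply: dot_ones_avec. Qed.

Lemma rank_ones (R : fieldType) : \rank (\matrix_(j < 1) (const_mx 1 : 'rV[R]_6)) = 1%N.
Proof.
apply/eqP; rewrite eqn_leq rank_leq_row lt0n mxrank_eq0.
by apply/negP => /eqP/matrixP/(_ ord0 ord0); rewrite !mxE => /eqP; rewrite oner_eq0.
Qed.

Definition ones_c8 (R : nzRingType) (j : 'I_2) : 'rV[R]_6 :=
  if j == ord0 then const_mx 1 else c8 R.

(* The columns [x12] and [x13] of the two forms give [[1, 1], [2, -1]], whose square is [3 * 1]. *)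
Lemma rank_ones_c8 (R : numFieldType) : \rank (\matrix_(j < 2) ones_c8 R j) = 2%N.
Proof.
apply/eqP; rewrite eqn_leq rank_leq_row /=.
pose N := \matrix_(k < 6, j < 2) (3^-1 * nth 0 (nth [::] [:: [:: 1; 1]; [:: 2; -1]] k) j : R).
suff /mulmx1_min_rank : 1%:M *m \matrix_(j < 2) ones_c8 R j *m N = 1%:M by [].
rewrite mul1mx; apply/matrixP => i j.
have nz3 : (3 : R) != 0 by rewrite pnatr_eq0.
rewrite !mxE !big_ord_recr big_ord0 /= !mxE /ones_c8.
by case: i => [[|[|//]] ?]; case: j => [[|[|//]] ?]; rewrite /= !mxE /=; field.
Qed.

Lemma not_has_aff_indep_PT (R : realFieldType) T : ~ has_aff_indep (@inPT R T) 6.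
Proof.
move=> PT6; have ones_const (j : 'I_1) x y : inPT T x -> inPT T y ->
    dot (const_mx 1) x = dot (const_mx 1) y :> R.
  by move=> /inPT_dot_ones -> /inPT_dot_ones ->.
by have := has_aff_indep_rank ones_const PT6; rewrite rank_ones.
Qed.

Lemma not_has_aff_indep_c8_face (R : realFieldType) T :
  ~ has_aff_indep (fun x => @inPT R T x /\ dot (c8 R) x = 0) 5.
Proof.
move=> F5; have forms_const j x y : inPT T x /\ dot (c8 R) x = 0 ->
    inPT T y /\ dot (c8 R) y = 0 -> dot (ones_c8 R j) x = dot (ones_c8 R j) y.
  move=> [Px cx] [Py cy].
  by rewrite /ones_c8; case: ifP; rewrite ?cx ?cy ?(inPT_dot_ones Px) ?(inPT_dot_ones Py).
by have := has_aff_indep_rank forms_const F5; rewrite rank_ones_c8.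
Qed.

Fixpoint rep213 (m : nat) (t : seq 'I_3) : seq 'I_3 :=
  if m is m'.+1 then [:: l2, l1, l3 & rep213 m' t] else t.

Lemma size_rep213 m t : size (rep213 m t) = (3 * m + size t)%N.
Proof. by elim: m => //= m ->; rewrite mulnS. Qed.

Lemma pairs_rep213S m s :
  pairs (rep213 m.+1 (l2 :: s)) = [:: (l2, l1), (l1, l3), (l3, l2) & pairs (rep213 m (l2 :: s))].
Proof.
rewrite [rep213 m.+1 _]/=.
have [s' ->] : exists s', rep213 m (l2 :: s) = l2 :: s' by case: m => [|m]; eexists.
by rewrite !pairs_cons2.
Qed.

Lemma count_pairs_rep213 (P : pred ('I_3 * 'I_3)) m s :
  count P (pairs (rep213 m (l2 :: s))) =
  (m * count P [:: (l2, l1); (l1, l3); (l3, l2)] + count P (pairs (l2 :: s)))%N.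
Proof. by elim: m => [|m IH]; rewrite ?pairs_rep213S /= ?IH /=; nia. Qed.

Lemma nrep_rep213 m s : nrep (rep213 m (l2 :: s)) = nrep (l2 :: s).
Proof. by elim: m => // m IH; rewrite /nrep pairs_rep213S /= -/(nrep _) IH. Qed.

(* Junk value [l1 l1 ... l1] (not a word) when [rep213 (k - 2) t] has the wrong length. *)
Definition cycle_word k (t : seq 'I_3) : (3 * k + 1).-tuple 'I_3 :=
  insubd (nseq_tuple (3 * k + 1) l1) (rep213 (k - 2) t).

Lemma cycle_wordE k t : (2 <= k)%N -> size t = 7%N -> cycle_word k t = rep213 (k - 2) t :> seq _.
Proof. by move=> k2 t7; rewrite insubdK // unfold_in size_rep213 t7; apply/eqP; lia. Qed.

(* Each period of the cycle [213] contains one of the pairs 12, 31, 32 and tails 0 to 4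
   contain two, so their words contain [k] of them and lie on the face; tail 5 contains
   three. *)
Definition tail (i : nat) : seq 'I_3 :=
  l2 :: nth [::] [:: [:: l1; l2; l1; l2; l1; l3]; [:: l1; l2; l1; l3; l1; l3];
                     [:: l1; l2; l1; l3; l2; l1]; [:: l1; l2; l1; l3; l2; l3];
                     [:: l1; l3; l2; l1; l3; l2]; [:: l1; l2; l1; l2; l1; l2]] i.

Lemma size_tail i : (i < 6)%N -> size (tail i) = 7%N.
Proof. by case: i => [|[|[|[|[|[|//]]]]]]. Qed.

Lemma is_word_tail k i : (2 <= k)%N -> (i < 6)%N -> is_word (cycle_word k (tail i)).
Proof.
move=> k2 i6; rewrite is_wordE cycle_wordE ?size_tail // nrep_rep213.
by case: i i6 => [|[|[|[|[|[|//]]]]]].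
Qed.

Definition tail_count (i : nat) (j : 'I_6) : nat := count (pred1 (pair6 j)) (pairs (tail i)).

Lemma xcount_tail k i j : (2 <= k)%N -> (i < 6)%N ->
  xcount (cycle_word k (tail i)) (pfst j) (psnd j) =
  ((k - 2) * count (pred1 (pair6 j)) [:: (l2, l1); (l1, l3); (l3, l2)] + tail_count i j)%N.
Proof. by move=> k2 i6; rewrite xcountE cycle_wordE ?size_tail // pair6E count_pairs_rep213. Qed.

Definition tail_diff (i : nat) (j : 'I_6) : int := (tail_count i.+1 j)%:Z - (tail_count 0 j)%:Z.

Definition tail_diff_inv (j : 'I_6) (i : nat) : int :=
  nth 0 (nth [::] [:: [:: 0; -1; 0; 0; 0]; [:: 0; -1; 0; 0; -1]; [:: 0; 1; 0; -1; -1];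
                      [:: 0; 0; 1; -1; -1]; [:: 1; 1; 0; -1; 0]; [:: 0; 0; 0; 0; 0]] j) i.

Lemma tail_diffK (i j : 'I_5) : \sum_k tail_diff i k * tail_diff_inv k j = (i == j)%:R.
Proof.
rewrite !big_ord_recr big_ord0.
by case: i => [[|[|[|[|[|//]]]]] ?]; case: j => [[|[|[|[|[|//]]]]] ?]; vm_compute.
Qed.

Lemma xcount_tail_diff (R : nzRingType) k i j : (2 <= k)%N -> (i < 5)%N ->
  (xcount (cycle_word k (tail i.+1)) (pfst j) (psnd j))%:R -
  (xcount (cycle_word k (tail 0)) (pfst j) (psnd j))%:R = (tail_diff i j)%:~R :> R.
Proof.
move=> k2 i5; rewrite !xcount_tail // !(natrD _ ((k - 2) * _)) opprD addrACA subrr add0r.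
by rewrite /tail_diff rmorphB.
Qed.

Lemma has_aff_indep_PT (R : realFieldType) k : (2 <= k)%N -> has_aff_indep (@inPT R (3 * k + 1)) 5.
Proof.
move=> k2; exists (fun i : 'I_6 => avec R (cycle_word k (tail i))); split.
  by move=> i; apply/inPT_avec/is_word_tail.
apply: etrans (@rank_int_right_inverse R 5 6 (fun i => tail_diff i) (fun k j => tail_diff_inv k j)
  tail_diffK).
by congr mxrank; apply/matrixP => i j; rewrite !mxE lift0 xcount_tail_diff.
Qed.

Lemma dot_c8_tail (R : comNzRingType) k i : (2 <= k)%N -> (i < 5)%N ->
  dot (c8 R) (avec R (cycle_word k (tail i))) = 0.
Proof.
move=> k2 i5; have i6 : (i < 6)%N by apply: leqW.
rewrite dot_c8_avec ?is_word_tail // cycle_wordE ?size_tail // count_pairs_rep213.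
have -> : count c8_pos (pairs (tail i)) = 2%N by case: i i5 {i6} => [|[|[|[|[|//]]]]].
have -> : ((3 * k + 1).-1 = 3 * ((k - 2) * 1 + 2))%N by rewrite addn1 /=; lia.
by rewrite natrM subrr.
Qed.

Lemma has_aff_indep_c8_face (R : realFieldType) k : (2 <= k)%N ->
  has_aff_indep (fun x => @inPT R (3 * k + 1) x /\ dot (c8 R) x = 0) 4.
Proof.
move=> k2; exists (fun i : 'I_5 => avec R (cycle_word k (tail i))); split.
  move=> i; split; last exact: dot_c8_tail.
  by apply/inPT_avec/is_word_tail => //; apply: leqW.
have diffK (i j : 'I_4) : \sum_k tail_diff i k * tail_diff_inv k j = (i == j)%:R.
  exact: tail_diffK (widen_ord (leqnSn 4) i) (widen_ord (leqnSn 4) j).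
apply: etrans (@rank_int_right_inverse R 4 6 (fun i => tail_diff i) (fun k j => tail_diff_inv k j)
  diffK).
by congr mxrank; apply/matrixP => i j; rewrite !mxE lift0 xcount_tail_diff // leqW.
Qed.

Lemma c8_defines_facet (R : realFieldType) k : (2 <= k)%N -> defines_facet (3 * k + 1) (c8 R).
Proof.
move=> k2; split; first exact: dot_c8_avec_ge0.
exists 5; split; right.
  by exists 5%N; split => //; split; [exact: has_aff_indep_PT | exact: not_has_aff_indep_PT].
by exists 4%N; split => //; split;
  [exact: has_aff_indep_c8_face | exact: not_has_aff_indep_c8_face].
Qed.

Definition pair_act (s : 'S_3) (k : 'I_6) : 'I_6 := pidx (s (pfst k)) (s (psnd k)).

Lemma pair_actK s k : (pfst (pair_act s k), psnd (pair_act s k)) = (s (pfst k), s (psnd k)).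
Proof. by rewrite pidxK // (inj_eq perm_inj) pfst_neq_psnd. Qed.

Lemma pair_act_inj s : injective (pair_act s).
Proof.
move=> k1 k2 e; have := pair_actK s k1; rewrite e pair_actK => -[/perm_inj e1 /perm_inj e2].
by rewrite -(pidx_pair k1) -(pidx_pair k2) e1 e2.
Qed.

Lemma pair_actKV s k : pair_act s (pair_act s^-1%g k) = k.
Proof. by rewrite /pair_act; case: (pair_actK s^-1%g k) => -> ->; rewrite !permKV pidx_pair. Qed.

Definition pair_perm (s : 'S_3) : 'S_6 := perm (@pair_act_inj s).

Lemma sactE (R : nzRingType) s (x : 'rV[R]_6) : sact s x = x *m perm_mx (pair_perm s)^-1%g.
Proof. by rewrite -col_permE; apply/rowP => k; rewrite !mxE permE. Qed.

Lemma sactK (R : nzRingType) s (x : 'rV[R]_6) : sact s^-1%g (sact s x) = x.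
Proof. by apply/rowP => k; rewrite !mxE -[pidx _ _]/(pair_act _ _) pair_actKV. Qed.

Lemma dot_sact (R : nzRingType) s (d x : 'rV[R]_6) : dot (sact s d) (sact s x) = dot d x.
Proof.
by rewrite /dot [RHS](reindex_inj (@pair_act_inj s)); apply: eq_bigr => k _; rewrite !mxE.
Qed.

Lemma map_tuple_permK T (s : 'S_3) : cancel (@map_tuple T _ _ s) (map_tuple s^-1%g).
Proof. by move=> w; apply: val_inj; rewrite /= -map_comp (eq_map (permK s)) map_id. Qed.

Lemma map_tuple_permKV T (s : 'S_3) : cancel (@map_tuple T _ _ s^-1%g) (map_tuple s).
Proof. by move=> w; apply: val_inj; rewrite /= -map_comp (eq_map (permKV s)) map_id. Qed.

Lemma sact_avec (R : nzRingType) s T (w : T.-tuple 'I_3) :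
  sact s (avec R w) = avec R (map_tuple s^-1%g w).
Proof.
apply/rowP => k; rewrite !mxE !xcountE /= pairs_map count_map -[pidx _ _]/(pair_act s k).
congr _%:R; apply: eq_count => p /=; rewrite pair_actK.
by rewrite !xpair_eqE !(canF_eq (permKV s)).
Qed.

Lemma inPT_sact (R : realFieldType) T s (x : 'rV[R]_6) : inPT T x -> inPT T (sact s x).
Proof.
case=> lam [lam_ge0 lam_word lam1 ->].
have map_inj (u : 'S_3) := can_inj (@map_tuple_permK T u).
exists (fun w => lam (map_tuple s w)); split => //.
- by move=> w /lam_word; rewrite is_word_map //; apply: perm_inj.
- by rewrite -lam1 [RHS](reindex_inj (map_inj s)).
rewrite sactE mulmx_suml; under eq_bigr do rewrite -scalemxAl -sactE sact_avec.
rewrite [RHS](reindex_inj (map_inj s^-1%g)); apply: eq_bigr => w _.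
by rewrite map_tuple_permKV.
Qed.

Lemma inPT_sactE (R : realFieldType) T s (x : 'rV[R]_6) : inPT T (sact s x) <-> inPT T x.
Proof. by split=> [/(inPT_sact s^-1%g)|/inPT_sact //]; rewrite sactK. Qed.

Lemma defines_facet_sact (R : realFieldType) T s (c : 'rV[R]_6) :
  defines_facet T c -> defines_facet T (sact s c).
Proof.
case=> c_ge0 [d [Pd Fd]]; split.
  move=> w ww; rewrite -[w](map_tuple_permK s) -sact_avec dot_sact.
  by apply: c_ge0; rewrite is_word_map //; apply: perm_inj.
exists d; split=> //; apply: (affdim_mulmx (unitmx_perm _ (pair_perm s)^-1%g) _ Fd) => x.
by rewrite -sactE dot_sact inPT_sactE.
Qed.

Theorem proposition8 (R : realFieldType) (k : nat) (hk : (2 <= k)%N) (s : 'S_3) :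
  @defines_facet R (3 * k + 1) (sact s (@c8 R)).
Proof. exact/defines_facet_sact/c8_defines_facet. Qed.
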